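(* Let $G$ be a locally compact group, $p\in(1,\infty)$ and $(\pi,E)\in\mathrm{Rep}_p(G)$. Then $A_{p,\pi}=A_{p,\pi^\infty}$ (as normed spaces of functions on $G$).
   Context: A representation $(\pi,E)$ of $G$ is a strongly continuous homomorphism from $G$ into the invertible isometries of a Banach space $E$. A $QSL_p$-space is a Banach space isometric to a quotient of a closed subspace of an $L_p$-space; $\mathrm{Rep}_p(G)$ is the class of representations on $QSL_p$-spaces. $L_p(E)$ is the space of sequences $(\xi_n)_n$ in $E$ with $(\sum_n\|\xi_n\|^p)^{1/p}<\infty$ (its dual is $L_{p'}(E^* )$, $1/p+1/p'=1$), and $\pi^\infty(x)(\xi_n)_n=(\pi(x)\xi_n)_n$. For a representation $(\rho,F)$, $A_{p,\rho}$ is the space of functions $u(x)=\sum_n\langle\rho(x)\xi_n,\eta_n\rangle$ with $\xi_n\in F$, $\eta_n\in F^*$, $\sum_n\|\xi_n\|\|\eta_n\|<\infty$, with norm the infimum of $\sum_n\|\xi_n\|\|\eta_n\|$ over all such expressions. *)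

From HB Require Import structures.
From mathcomp Require Import all_boot all_order all_algebra.
From mathcomp Require Import all_classical all_reals all_analysis.
From mathcomp Require Import complex.
Set Implicit Arguments. Unset Strict Implicit. Unset Printing Implicit Defensive.
Import Order.TTheory GRing.Theory Num.Theory.
Import numFieldNormedType.Exports.
Local Open Scope classical_set_scope.
Local Open Scope ring_scope.

(* real-valued norm: on a normed space over R[i] the library norm `|v| is an
   element of R[i] with zero imaginary part; we take its real part. *)
Definition nrm (R : realType) (V : normedZmodType R[i]) (v : V) : R :=
  complex.Re `|v|.

Definition lc_group (G : topologicalType) (mul : G -> G -> G) (inv : G -> G)
    (one : G) : Prop :=
  [/\ associative mul, left_id one mul & left_inverse one inv mul] /\
  [/\ continuous (fun xy : G * G => mul xy.1 xy.2), continuous inv,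
      hausdorff_space G & locally_compact [set: G]].

Definition isom_rep (R : realType) (G : topologicalType) (mul : G -> G -> G)
    (E : normedModType R[i]) (pi : G -> E -> E) : Prop :=
  [/\ forall x (a : R[i]) (u v : E), pi x (a *: u + v) = a *: pi x u + pi x v,
      forall x v, `|pi x v| = `|v|,
      forall x, bijective (pi x),
      forall x y v, pi (mul x y) v = pi x (pi y v)
    & forall v, continuous (fun x : G => pi x v)].

Section Lp.
Context (R : realType) (d : measure_display) (T : measurableType d)
  (mu : {measure set T -> \bar R}).

Definition cmeasurable (f : T -> R[i]) : Prop :=
  measurable_fun setT (fun t => complex.Re (f t)) /\
  measurable_fun setT (fun t => complex.Im (f t)).

Definition Lpnorm (p : R) (f : T -> R[i]) : \bar R :=
  ((\int[mu]_t ((nrm (f t)) `^ p)%:E) `^ p^-1)%E.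

Definition Lp (p : R) : set (T -> R[i]) :=
  [set f | cmeasurable f /\ (\int[mu]_t ((nrm (f t)) `^ p)%:E < +oo)%E].
End Lp.

(* E is a QSL_p-space: there are a measure space (T, mu), a closed linear
   subspace F of L_p(mu) and a linear surjection q : F -> E which is a quotient
   map, i.e. ||e|| = inf { ||f||_p : f in F, q f = e } for all e; equivalently
   q induces an isometric isomorphism F / ker q ~= E. *)
Definition QSLp (R : realType) (p : R) (E : normedModType R[i]) : Prop :=
  exists (d : measure_display) (T : measurableType d)
         (mu : {measure set T -> \bar R})
         (F : set (T -> R[i])) (q : (T -> R[i]) -> E),
  [/\ F `<=` Lp mu p,
      F (fun=> 0),
      forall (a : R[i]) f g, F f -> F g -> F (fun t => a * f t + g t)
    & forall (f : T -> R[i]) (fn : nat -> T -> R[i]),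
        (forall n, F (fn n)) -> Lp mu p f ->
        (fun n => Lpnorm mu p (fun t => fn n t - f t)) @ \oo --> 0%E ->
        F f] /\
  [/\ forall (a : R[i]) f g, F f -> F g ->
        q (fun t => a * f t + g t) = a *: q f + q g
    & forall e : E,
        ereal_inf [set Lpnorm mu p f | f in [set f | F f /\ q f = e]]
        = (nrm e)%:E].

Definition dual_elem (R : realType) (E : normedModType R[i]) (eta : E -> R[i])
  : Prop :=
  (forall (a : R[i]) (u v : E), eta (a *: u + v) = a * eta u + eta v) /\
  exists C : R, forall v, nrm (eta v) <= C * nrm v.

Definition dnrm (R : realType) (E : normedModType R[i]) (eta : E -> R[i]) : R :=
  sup [set nrm (eta v) | v in [set v : E | nrm v <= 1]].

(* ---------- the spaces A_{p,rho}, generic form ----------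
   Given the "vectors" X (with membership predicate and norm), the "dual
   vectors" Y (idem) and the coefficient pairing (x, xi, eta) |-> <rho(x)xi, eta>,
   u is in A iff u(x) = sum_n <rho(x) xi_n, eta_n> (pointwise convergent
   series) with sum_n ||xi_n|| ||eta_n|| < oo; the norm is the infimum. *)
Section Agen.
Context (R : realType) (G X Y : Type) (inX : X -> Prop) (inY : Y -> Prop)
  (nX : X -> R) (nY : Y -> R) (pair : G -> X -> Y -> R[i]).

Definition Arepr (u : G -> R[i]) (xi : nat -> X) (eta : nat -> Y) : Prop :=
  [/\ forall n, inX (xi n), forall n, inY (eta n),
      (\sum_(0 <= n <oo) (nX (xi n) * nY (eta n))%:E < +oo)%E
    & forall x, series (fun n => pair x (xi n) (eta n)) @ \oo -->
                (u x : (R[i] : numFieldType))].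

Definition Aspace : set (G -> R[i]) :=
  [set u | exists xi eta, Arepr u xi eta].

Definition Anorm (u : G -> R[i]) : \bar R :=
  ereal_inf [set s : \bar R | exists xi eta, Arepr u xi eta /\
     s = (\sum_(0 <= n <oo) (nX (xi n) * nY (eta n))%:E)%E].
End Agen.

Section Api.
Context (R : realType) (G : Type) (E : normedModType R[i]) (pi : G -> E -> E).

Definition A_pi := Aspace (fun _ : E => True) (@dual_elem R E)
  (@nrm R E) (@dnrm R E) (fun x xi (eta : E -> R[i]) => eta (pi x xi)).
Definition Anorm_pi := Anorm (fun _ : E => True) (@dual_elem R E)
  (@nrm R E) (@dnrm R E) (fun x xi (eta : E -> R[i]) => eta (pi x xi)).
End Api.

Section Linf.
Context (R : realType) (G : Type) (E : normedModType R[i]) (pi : G -> E -> E).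

Definition conj_exp (p : R) : R := (1 - p^-1)^-1.

Definition lpnorm (p : R) (a : nat -> R) : \bar R :=
  ((\sum_(0 <= k <oo) ((a k) `^ p)%:E) `^ p^-1)%E.

Definition LpE (p : R) (xi : nat -> E) : Prop :=
  (\sum_(0 <= k <oo) ((nrm (xi k)) `^ p)%:E < +oo)%E.
Definition LpE_norm (p : R) (xi : nat -> E) : R :=
  fine (lpnorm p (fun k => nrm (xi k))).

Definition LpEdual (p' : R) (eta : nat -> E -> R[i]) : Prop :=
  (forall k, dual_elem (eta k)) /\
  (\sum_(0 <= k <oo) ((dnrm (eta k)) `^ p')%:E < +oo)%E.
Definition LpEdual_norm (p' : R) (eta : nat -> E -> R[i]) : R :=
  fine (lpnorm p' (fun k => dnrm (eta k))).

(* <pi^\infty(x) xi, eta> = sum_k <pi(x) xi_k, eta_k> *)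
Definition pair_inf (x : G) (xi : nat -> E) (eta : nat -> E -> R[i]) : R[i] :=
  limn (series (fun k => eta k (pi x (xi k))) : nat -> (R[i] : numFieldType)).

Definition A_pi_inf (p : R) :=
  Aspace (LpE p) (LpEdual (conj_exp p)) (LpE_norm p)
    (LpEdual_norm (conj_exp p)) pair_inf.
Definition Anorm_pi_inf (p : R) :=
  Anorm (LpE p) (LpEdual (conj_exp p)) (LpE_norm p)
    (LpEdual_norm (conj_exp p)) pair_inf.
End Linf.

From HB Require Import structures.
From mathcomp Require Import all_boot all_order all_algebra.
From mathcomp Require Import all_classical all_reals all_analysis.
From mathcomp Require Import complex.
Import Order.TTheory GRing.Theory Num.Theory.
Import numFieldNormedType.Exports.
Local Open Scope classical_set_scope.
Local Open Scope ring_scope.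

(* Placing xi_n and eta_n in the first coordinate of L_p(E) and L_p'(E^* )
   turns a decomposition u(x) = sum_n <pi(x) xi_n, eta_n> into one for
   pi^\infty with the same norm sum.  Conversely, for xi_n in L_p(E) and
   eta_n in L_p'(E^* ), Hoelder's inequality bounds
   sum_k ||xi_{n,k}|| ||eta_{n,k}|| by ||xi_n||_p ||eta_n||_p', so, pi being
   isometric, the double family <pi(x) xi_{n,k}, eta_{n,k}> is absolutely
   summable.  Enumerating N x N by a bijection then yields a decomposition
   for pi with no larger norm sum: absolute summability lets the flattened
   series be summed in iterated order, which reduces to nonnegative families
   through the positive and negative parts of the real and imaginary parts. *)

Section complex_norm.
Context {R : realType}.
Local Open Scope complex_scope.

Lemma nrmE {V : normedZmodType R[i]} (v : V) : `|v| = (nrm v)%:C.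
Proof.
rewrite /nrm; move: (normr_ge0 v); case: `|v| => x y.
by rewrite lecE /= => /andP[/eqP -> _].
Qed.

Lemma nrm_ge0 {V : normedZmodType R[i]} (v : V) : 0 <= nrm v.
Proof. by rewrite -ler0c -nrmE. Qed.

Lemma nrm0 {V : normedZmodType R[i]} : nrm (0 : V) = 0.
Proof. by rewrite /nrm normr0. Qed.

Lemma nrm_eq0 {V : normedZmodType R[i]} {v : V} : nrm v = 0 -> v = 0.
Proof. by move=> v0; apply: normr0_eq0; rewrite nrmE v0. Qed.

Lemma nrmZ (E : normedModType R[i]) (a : R[i]) (v : E) :
  nrm (a *: v) = nrm a * nrm v.
Proof. by rewrite [in LHS]/nrm normrZ (nrmE a) (nrmE v) -rmorphM. Qed.

Lemma nrmM (a b : R[i]) : nrm (a * b) = nrm a * nrm b.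
Proof. by rewrite [in LHS]/nrm normrM (nrmE a) (nrmE b) -rmorphM. Qed.

Lemma nrm_real (x : R) : nrm x%:C = `|x|.
Proof. by rewrite /nrm normc_def /= expr0n addr0 sqrtr_sqr. Qed.

Lemma normr_Re_le (z : R[i]) : `|complex.Re z| <= nrm z.
Proof. by rewrite -lecR -nrmE normc_ge_Re. Qed.

Lemma normr_Im_le (z : R[i]) : `|complex.Im z| <= nrm z.
Proof.
by rewrite /nrm normc_def /= -sqrtr_sqr ler_sqrt ?lerDr ?addr_ge0 ?sqr_ge0.
Qed.

Lemma cvg_real_complex (u : nat -> R) (l : R) : u @ \oo --> l ->
  (fun n => (u n)%:C : (R[i] : numFieldType)) @ \oo --> (l%:C : R[i] : numFieldType).
Proof.
move=> /cvgrPdist_lt ul; apply/cvgrPdist_lt => e.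
rewrite ltcE /= => /andP[/eqP e_real e0].
near=> n; rewrite -rmorphB nrmE nrm_real ltcE /= e_real eqxx /=.
by near: n; exact: ul.
Unshelve. all: by end_near. Qed.

End complex_norm.

Section dual.
Context {R : realType} {E : normedModType R[i]}.
Implicit Types (eta : E -> R[i]) (v : E).
Local Open Scope complex_scope.

Lemma dual_elem0 {eta} : dual_elem eta -> eta 0 = 0.
Proof.
move=> [lin _]; have := lin 1 0 0; rewrite scale1r addr0 mul1r => eta00.
by apply: (addrI (eta 0)); rewrite addr0 -eta00.
Qed.

Lemma dual_elemZ {eta} a v : dual_elem eta -> eta (a *: v) = a * eta v.
Proof. by move=> de; rewrite -[a *: v]addr0 (proj1 de) (dual_elem0 de) addr0. Qed.

Lemma dual_zero : dual_elem (fun _ : E => 0 : R[i]).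
Proof. by split=> [*|]; [rewrite mulr0 addr0 | exists 0 => v; rewrite nrm0 mul0r]. Qed.

Lemma dnrm_has_sup {eta} : dual_elem eta ->
  has_sup [set nrm (eta v) | v in [set v : E | nrm v <= 1]].
Proof.
move=> [_ [C hC]]; split; first by exists (nrm (eta 0)), 0 => //=; rewrite nrm0.
exists `|C| => _ [v /= v1 <-]; apply: le_trans (hC v) _.
apply: le_trans (ler_norm _) _; rewrite normrM (ger0_norm (nrm_ge0 _)).
by rewrite -[leRHS]mulr1 ler_wpM2l.
Qed.

Lemma dnrm_ub {eta} v : dual_elem eta -> nrm v <= 1 -> nrm (eta v) <= dnrm eta.
Proof. by move=> de v1; apply: (sup_upper_bound (dnrm_has_sup de)); exists v. Qed.

Lemma dnrm_ge0 {eta} : dual_elem eta -> 0 <= dnrm eta.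
Proof.
by move=> de; apply: le_trans (nrm_ge0 (eta 0)) (dnrm_ub 0 de _); rewrite nrm0.
Qed.

Lemma dnrm_zero : dnrm (fun _ : E => 0 : R[i]) = 0.
Proof.
apply/le_anti; rewrite dnrm_ge0 ?andbT; last exact: dual_zero.
apply: ge_sup; first by exists 0, 0 => //=; rewrite !nrm0.
by move=> _ [v _ <-]; rewrite nrm0.
Qed.

Lemma nrm_dual_le {eta} v : dual_elem eta -> nrm (eta v) <= dnrm eta * nrm v.
Proof.
move=> de; have [v0|v_neq0] := eqVneq (nrm v) 0.
  by rewrite v0 (nrm_eq0 v0) (dual_elem0 de) nrm0 mulr0.
have vp : 0 < nrm v by rewrite lt0r v_neq0 nrm_ge0.
have := @dnrm_ub eta ((nrm v)^-1%:C *: v) de.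
rewrite nrmZ nrm_real (dual_elemZ _ _ de) nrmM nrm_real ger0_norm ?invr_ge0 ?nrm_ge0 //.
rewrite mulVf // lexx => /(_ isT); rewrite -(ler_pM2r vp) mulrAC mulVf ?mul1r //.
Qed.

End dual.

Section iterated_series.
Context {K : numFieldType}.
Implicit Types (c : nat -> nat -> K) (e : nat -> nat * nat).

Definition iter_flat_cvg c e (l : K) : Prop :=
  [/\ forall n, cvgn (series (c n)),
      series (fun n => limn (series (c n))) @ \oo --> l
    & series (fun m => c (e m).1 (e m).2) @ \oo --> l].

Lemma cvg_series_lincomb (w : K) {f g : nat -> K} {lf lg : K} :
  series f @ \oo --> lf -> series g @ \oo --> lg ->
  series (fun k => f k + w * g k) @ \oo --> lf + w * lg.
Proof.
move=> cf cg; have -> : series (fun k => f k + w * g k) =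
    (fun N => series f N + w * series g N).
  by apply/funext => N; rewrite /series /= big_split /= mulr_sumr.
exact: cvgD cf (cvgM (cvg_cst w) cg).
Qed.

Lemma iter_flat_cvg_lincomb (w : K) {c1 c2 e l1 l2} :
  iter_flat_cvg c1 e l1 -> iter_flat_cvg c2 e l2 ->
  iter_flat_cvg (fun n k => c1 n k + w * c2 n k) e (l1 + w * l2).
Proof.
case=> in1 out1 flat1 [in2 out2 flat2].
have inner n := cvg_series_lincomb w (in1 n) (in2 n).
split.
- by move=> n; exact: cvgP (inner n).
- rewrite (_ : (fun n => _) =
      fun n => limn (series (c1 n)) + w * limn (series (c2 n))); last first.
    by apply/funext => n; exact: cvg_lim (inner n).
  exact: cvg_series_lincomb.
- exact: cvg_series_lincomb.
Qed.

End iterated_series.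

Section iterated_nnseries.
Context {R : realType}.
Local Open Scope ereal_scope.

Lemma nneseries_term_le {f : nat -> \bar R} n : (forall k, 0 <= f k) ->
  f n <= \sum_(k <oo) f k.
Proof.
move=> f0; apply: le_trans (nneseries_lim_ge n.+1 (fun k _ _ => f0 k)).
by rewrite big_nat_recr//= leeDr// sume_ge0.
Qed.

Lemma le_nneseries2 {f g : nat -> nat -> R} :
  (forall n k, (0 <= f n k <= g n k)%R) ->
  \sum_(n <oo) \sum_(k <oo) (f n k)%:E <= \sum_(n <oo) \sum_(k <oo) (g n k)%:E.
Proof.
move=> fg; apply: lee_nneseries => [n _ _|n _].
  by apply: nneseries_ge0 => k _ _; rewrite lee_fin; case/andP: (fg n k).
by apply: lee_nneseries => [k _ _|k _]; rewrite lee_fin; case/andP: (fg n k).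
Qed.

Lemma nneseries_reindex_pair (g : nat -> nat -> \bar R) {e : nat -> nat * nat} :
  set_bij setT setT e -> (forall n k, 0 <= g n k) ->
  \sum_(m <oo) g (e m).1 (e m).2 = \sum_(n <oo) \sum_(k <oo) g n k.
Proof.
move=> be g0.
rewrite nneseries_esumT; last by move=> m; exact: g0.
rewrite nneseries_esumT; last by move=> n; apply: nneseries_ge0 => *; exact: g0.
rewrite -(reindex_esum setT setT e (fun x => g x.1 x.2))//.
have -> : [set: nat * nat] = [set: nat] `*`` (fun=> [set: nat]).
  by apply/seteqP; split => -[].
rewrite -esum_esum//; apply: eq_esum => n _.
by rewrite nneseries_esumT.
Qed.

Lemma nnseries_cvg_fine {u : nat -> R} : (forall k, (0 <= u k)%R) ->
  \sum_(k <oo) (u k)%:E < +oo ->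
  series u @ \oo --> fine (\sum_(k <oo) (u k)%:E).
Proof.
move=> u0 uoo; have cu := nnseries_is_cvg u0 uoo.
suff <- : limn (series u) = fine (\sum_(k <oo) (u k)%:E) by [].
have sum_ge0 : 0 <= \sum_(k <oo) (u k)%:E.
  by apply: nneseries_ge0 => k _ _; rewrite lee_fin.
apply: EFin_inj; rewrite fineK ?ge0_fin_numE // -EFin_lim //.
by congr (limn _); apply/funext => n /=; rewrite /series /= sumEFin.
Qed.

Lemma iter_flat_cvg_nnseries (c : nat -> nat -> R) (e : nat -> nat * nat) :
  set_bij setT setT e -> (forall n k, (0 <= c n k)%R) ->
  \sum_(n <oo) \sum_(k <oo) (c n k)%:E < +oo ->
  iter_flat_cvg c e (fine (\sum_(n <oo) \sum_(k <oo) (c n k)%:E)).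
Proof.
move=> be c0 coo.
have inner_ge0 n : 0 <= \sum_(k <oo) (c n k)%:E.
  by apply: nneseries_ge0 => k _ _; rewrite lee_fin.
have inner_lty n : \sum_(k <oo) (c n k)%:E < +oo.
  exact: le_lt_trans (nneseries_term_le n inner_ge0) coo.
have inner n := nnseries_cvg_fine (c0 n) (inner_lty n).
have outerE : \sum_(n <oo) \sum_(k <oo) (c n k)%:E =
    \sum_(n <oo) (fine (\sum_(k <oo) (c n k)%:E))%:E.
  by apply: eq_eseriesr => n _; rewrite fineK // ge0_fin_numE.
split.
- by move=> n; exact: cvgP (inner n).
- rewrite (_ : (fun n => _) = fun n => fine (\sum_(k <oo) (c n k)%:E)); last first.
    by apply/funext => n; exact: cvg_lim (inner n).
  rewrite outerE; apply: nnseries_cvg_fine; last by rewrite -outerE.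
  by move=> n; exact: fine_ge0.
- have flatE : \sum_(m <oo) (c (e m).1 (e m).2)%:E =
      \sum_(n <oo) \sum_(k <oo) (c n k)%:E.
    by apply: nneseries_reindex_pair => // n k; rewrite lee_fin.
  by rewrite -flatE; apply: nnseries_cvg_fine; rewrite ?flatE.
Qed.

Lemma iter_flat_cvg_abs (c : nat -> nat -> R) (e : nat -> nat * nat) :
  set_bij setT setT e -> \sum_(n <oo) \sum_(k <oo) (`|c n k|%R)%:E < +oo ->
  exists l, iter_flat_cvg c e l.
Proof.
move=> be coo.
have part (d : nat -> nat -> R) : (forall n k, (0 <= d n k <= `|c n k|)%R) ->
    iter_flat_cvg d e (fine (\sum_(n <oo) \sum_(k <oo) (d n k)%:E)).
  move=> dc; apply: iter_flat_cvg_nnseries => //.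
    by move=> n k; case/andP: (dc n k).
  exact: le_lt_trans (le_nneseries2 dc) coo.
have posneg n k : ((c n)^\+ k + (c n)^\- k = `|c n k|)%R.
  by have /(congr1 (fun f => f k)) := funrposDneg (c n).
have pos_le n k : (0 <= (c n)^\+ k <= `|c n k|)%R.
  by rewrite funrpos_ge0 -posneg lerDl funrneg_ge0.
have neg_le n k : (0 <= (c n)^\- k <= `|c n k|)%R.
  by rewrite funrneg_ge0 -posneg lerDr funrpos_ge0.
eexists; have := iter_flat_cvg_lincomb (-1) (part _ pos_le) (part _ neg_le).
congr iter_flat_cvg; apply/funext => n; apply/funext => k.
by rewrite mulN1r; have /(congr1 (fun f => f k)) := funrposBneg (c n).
Qed.

End iterated_nnseries.

Section iterated_complex_series.
Context {R : realType}.
Local Open Scope complex_scope.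

Lemma cvg_series_real_complex {f : nat -> R} {l : R} : series f @ \oo --> l ->
  series (fun k => (f k)%:C : R[i]) @ \oo --> (l%:C : R[i] : numFieldType).
Proof.
move=> cf; rewrite (_ : series _ = fun N => (series f N)%:C).
  exact: cvg_real_complex.
by apply/funext => N; rewrite /series /= rmorph_sum.
Qed.

Lemma iter_flat_cvg_real_complex {c : nat -> nat -> R} {e l} :
  iter_flat_cvg c e l -> iter_flat_cvg (fun n k => (c n k)%:C : R[i]) e l%:C.
Proof.
case=> inner outer flat; have innerC n := cvg_series_real_complex (inner n).
split.
- by move=> n; apply/cvg_ex; eexists; exact: innerC n.
- rewrite (_ : (fun n => _) = fun n => (limn (series (c n)))%:C); last first.
    apply/funext => n.
    exact: (@cvg_lim (R[i] : numFieldType) (@norm_hausdorff _ _) _ _ _ _ _ (innerC n)).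
  exact: cvg_series_real_complex.
- exact: cvg_series_real_complex.
Qed.

Lemma iter_flat_cvg_dominated (a : nat -> nat -> R[i]) {e : nat -> nat * nat} :
  set_bij setT setT e -> (\sum_(n <oo) \sum_(k <oo) (nrm (a n k))%:E < +oo)%E ->
  exists l, iter_flat_cvg a e l.
Proof.
move=> be aoo.
have part (f : R[i] -> R) : (forall z, `|f z| <= nrm z) ->
    exists l, iter_flat_cvg (fun n k => f (a n k)) e l.
  move=> fle; apply: iter_flat_cvg_abs be _; apply: le_lt_trans aoo.
  by apply: le_nneseries2 => n k; rewrite normr_ge0 fle.
have [lr /iter_flat_cvg_real_complex re_cvg] := part _ normr_Re_le.
have [li /iter_flat_cvg_real_complex im_cvg] := part _ normr_Im_le.
exists (lr%:C + 'i%C * li%:C).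
have -> : a = (fun n k => (complex.Re (a n k))%:C + 'i%C * (complex.Im (a n k))%:C).
  by apply/funext => n; apply/funext => k; rewrite -complexE.
exact: (iter_flat_cvg_lincomb _ re_cvg im_cvg).
Qed.

End iterated_complex_series.

Section lp_sequences.
Context {R : realType}.
Local Open Scope ereal_scope.

Lemma eseries_head (f : nat -> \bar R) : (forall k, (0 < k)%N -> f k = 0) ->
  \sum_(k <oo) f k = f 0%N.
Proof.
move=> f0; apply: (lim_near_cst (@ereal_hausdorff R)).
exists 1%N => // -[|N] //= _; rewrite big_nat_recl // big1 ?adde0 //.
by move=> k _; exact: f0.
Qed.

Lemma series_head {K : numFieldType} (u : nat -> K) :
  (forall k, (0 < k)%N -> u k = 0%R) -> limn (series u) = u 0%N.
Proof.
move=> u0; apply: (lim_near_cst (@norm_hausdorff K K)).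
exists 1%N => // -[|N] //= _; rewrite /series /= big_nat_recl // big1 ?addr0 //.
by move=> k _; exact: u0.
Qed.

Lemma powR_series_head (q : R) (f : nat -> R) : (0 < q)%R ->
  (forall k, (0 < k)%N -> f k = 0%R) ->
  \sum_(k <oo) ((f k) `^ q)%:E = ((f 0%N) `^ q)%:E.
Proof.
by move=> q0 f0; apply: eseries_head => k k0; rewrite f0 // powR0 // gt_eqF.
Qed.

Lemma lpnorm_head (q : R) (f : nat -> R) : (0 < q)%R -> (0 <= f 0%N)%R ->
  (forall k, (0 < k)%N -> f k = 0%R) -> lpnorm q f = (f 0%N)%:E.
Proof.
move=> q0 f00 f0; rewrite /lpnorm powR_series_head // poweR_EFin -powRrM.
by rewrite mulfV ?gt_eqF // powRr1.
Qed.

Lemma lpnorm_fineK (q : R) (f : nat -> R) :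
  \sum_(k <oo) ((f k) `^ q)%:E < +oo -> (fine (lpnorm q f))%:E = lpnorm q f.
Proof.
move=> fq; have fq0 : 0 <= \sum_(k <oo) ((f k) `^ q)%:E.
  by apply: nneseries_ge0 => k _ _; rewrite lee_fin powR_ge0.
have fq_fin : \sum_(k <oo) ((f k) `^ q)%:E \is a fin_num by rewrite ge0_fin_numE.
by rewrite /lpnorm -(fineK fq_fin) poweR_EFin.
Qed.

Lemma Lnorm_counting_lpnorm (p : R) (a : nat -> R) : (0 < p)%R ->
  (forall k, (0 <= a k)%R) -> Lnorm counting p%:E (EFin \o a) = lpnorm p a.
Proof.
move=> p0 a0; rewrite Lnorm_counting // /lpnorm; congr (_ `^ _).
by congr (limn _); apply/funext => N; apply: eq_bigr => k _ /=;
   rewrite ger0_norm // poweR_EFin.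
Qed.

Lemma nneseries_hoelder (p : R) (a b : nat -> R) : (1 < p)%R ->
  (forall k, (0 <= a k)%R) -> (forall k, (0 <= b k)%R) ->
  \sum_(k <oo) ((a k) `^ p)%:E < +oo ->
  \sum_(k <oo) ((b k) `^ conj_exp p)%:E < +oo ->
  \sum_(k <oo) (a k * b k)%:E <=
    (fine (lpnorm p a) * fine (lpnorm (conj_exp p) b))%:E.
Proof.
move=> p1 a0 b0 a_fin b_fin.
have p0 : (0 < p)%R by apply: lt_trans p1.
have q0 : (0 < conj_exp p)%R by rewrite invr_gt0 subr_gt0 invf_lt1.
have pq : (p^-1 + (conj_exp p)^-1 = 1)%R by rewrite invrK addrC subrK.
have nat_mfun (f : nat -> R) : measurable_fun setT f by [].
have := hoelder counting (nat_mfun a) (nat_mfun b) p0 q0 pq.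
rewrite !Lnorm_counting_lpnorm // => [|k]; last by rewrite /= mulr_ge0.
rewrite EFinM !lpnorm_fineK //; apply: le_trans.
rewrite /lpnorm invr1 poweRe1; last first.
  by apply: nneseries_ge0 => k _ _; rewrite lee_fin powR_ge0.
apply: lee_nneseries => [k _ _|k _]; first by rewrite lee_fin mulr_ge0.
by rewrite /= powRr1 // mulr_ge0.
Qed.

End lp_sequences.

Section Aspace_transfer.
Context {R : realType} {G X Y X' Y' : Type}.
Context {inX : X -> Prop} {inY : Y -> Prop} {nX : X -> R} {nY : Y -> R}
  {pair : G -> X -> Y -> R[i]}.
Context {inX' : X' -> Prop} {inY' : Y' -> Prop} {nX' : X' -> R} {nY' : Y' -> R}
  {pair' : G -> X' -> Y' -> R[i]}.
Local Open Scope ereal_scope.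

Hypothesis transfer : forall u xi eta, Arepr inX inY nX nY pair u xi eta ->
  exists xi' eta', Arepr inX' inY' nX' nY' pair' u xi' eta' /\
    \sum_(n <oo) (nX' (xi' n) * nY' (eta' n))%:E <=
    \sum_(n <oo) (nX (xi n) * nY (eta n))%:E.

Lemma Aspace_transfer :
  Aspace inX inY nX nY pair `<=` Aspace inX' inY' nX' nY' pair'.
Proof.
by move=> u [xi [eta /transfer [xi' [eta' [rep' _]]]]]; exists xi', eta'.
Qed.

Lemma Anorm_transfer u :
  Anorm inX' inY' nX' nY' pair' u <= Anorm inX inY nX nY pair u.
Proof.
apply: le_ereal_inf_tmp => _ [xi [eta [/transfer [xi' [eta' [rep' le_sum]]] ->]]].
by apply: le_trans le_sum; apply: ereal_inf_lbound; exists xi', eta'.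
Qed.

End Aspace_transfer.

Section Api_representations.
Context {R : realType} {G : Type} {E : normedModType R[i]}.
Variables (pi : G -> E -> E) (p : R).
Hypothesis p_gt1 : 1 < p.

Local Notation Arepr_pi := (Arepr (fun _ : E => True) (@dual_elem R E)
   (@nrm R E) (@dnrm R E) (fun x xi (eta : E -> R[i]) => eta (pi x xi))).
Local Notation Arepr_pi_inf := (Arepr (LpE p) (LpEdual (conj_exp p)) (LpE_norm p)
   (LpEdual_norm (conj_exp p)) (pair_inf pi)).

Let p_gt0 : 0 < p. Proof. exact: lt_trans p_gt1. Qed.
Let q_gt0 : 0 < conj_exp p. Proof. by rewrite invr_gt0 subr_gt0 invf_lt1. Qed.

Lemma Arepr_pi_to_pi_inf u xi eta : Arepr_pi u xi eta ->
  exists XI ETA, Arepr_pi_inf u XI ETA /\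
    (\sum_(n <oo) (LpE_norm p (XI n) * LpEdual_norm (conj_exp p) (ETA n))%:E <=
     \sum_(n <oo) (nrm (xi n) * dnrm (eta n))%:E)%E.
Proof.
case=> _ eta_dual sum_fin cv.
exists (fun n => nth 0 [:: xi n]), (fun n => nth (fun=> 0) [:: eta n]).
have XI_norm n : LpE_norm p (nth 0 [:: xi n]) = nrm (xi n).
  rewrite /LpE_norm lpnorm_head ?nrm_ge0 // => -[|k] // _.
  by rewrite nth_default ?nrm0.
have ETA_norm n : LpEdual_norm (conj_exp p) (nth (fun=> 0) [:: eta n]) = dnrm (eta n).
  rewrite /LpEdual_norm lpnorm_head //; first exact: dnrm_ge0 (eta_dual n).
  by case=> // k _; rewrite nth_default ?dnrm_zero.
have sumE : (\sum_(n <oo) (LpE_norm p (nth 0 [:: xi n]) *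
      LpEdual_norm (conj_exp p) (nth (fun=> 0) [:: eta n]))%:E =
    \sum_(n <oo) (nrm (xi n) * dnrm (eta n))%:E)%E.
  by apply: eq_eseriesr => n _; rewrite XI_norm ETA_norm.
rewrite sumE; split => //; split.
- move=> n; rewrite /LpE powR_series_head ?ltry // => -[|k] // _.
  by rewrite nth_default ?nrm0.
- move=> n; split.
    by case=> [|k]; [exact: eta_dual | rewrite nth_default //; exact: dual_zero].
  rewrite powR_series_head ?ltry // => -[|k] // _.
  by rewrite nth_default ?dnrm_zero.
- by rewrite sumE.
- move=> x; rewrite (_ : series _ = series (fun n => eta n (pi x (xi n)))).
    exact: cv.
  congr series; apply/funext => n; rewrite /pair_inf series_head // => -[|k] // _.
  by rewrite !nth_default.
Qed.

Hypothesis pi_isometry : forall x v, `|pi x v| = `|v|.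

Lemma Arepr_pi_inf_to_pi u XI ETA : Arepr_pi_inf u XI ETA ->
  exists xi eta, Arepr_pi u xi eta /\
    (\sum_(m <oo) (nrm (xi m) * dnrm (eta m))%:E <=
     \sum_(n <oo) (LpE_norm p (XI n) * LpEdual_norm (conj_exp p) (ETA n))%:E)%E.
Proof.
case=> XI_Lp ETA_Lp sum_fin cv.
have ETA_dual n k : dual_elem (ETA n k) := (ETA_Lp n).1 k.
have [e be] : exists e : nat -> nat * nat, set_bij setT setT e.
  by apply/card_set_bijP; apply: card_esym; exact: card_nat2.
pose b n k := nrm (XI n k) * dnrm (ETA n k).
have b_ge0 n k : 0 <= b n k by rewrite mulr_ge0 ?nrm_ge0 ?(dnrm_ge0 (ETA_dual n k)).
have b_le : (\sum_(n <oo) \sum_(k <oo) (b n k)%:E <=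
    \sum_(n <oo) (LpE_norm p (XI n) * LpEdual_norm (conj_exp p) (ETA n))%:E)%E.
  apply: lee_nneseries => [n _ _|n _].
    by apply: nneseries_ge0 => k _ _; rewrite lee_fin.
  apply: nneseries_hoelder => //.
  - by move=> k; exact: nrm_ge0.
  - by move=> k; exact: dnrm_ge0 (ETA_dual n k).
  - exact: XI_Lp.
  - exact: (ETA_Lp n).2.
have b_fin := le_lt_trans b_le sum_fin.
have flatE : (\sum_(m <oo) (b (e m).1 (e m).2)%:E =
    \sum_(n <oo) \sum_(k <oo) (b n k)%:E)%E.
  by apply: nneseries_reindex_pair => // n k; rewrite lee_fin.
exists (fun m => XI (e m).1 (e m).2), (fun m => ETA (e m).1 (e m).2).
rewrite flatE; split => //; split.
- by [].
- by move=> m; exact: ETA_dual.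
- by rewrite flatE.
move=> x; pose a n k := ETA n k (pi x (XI n k)).
have nrm_pi v : nrm (pi x v) = nrm v by rewrite /nrm pi_isometry.
have a_le n k : 0 <= nrm (a n k) <= b n k.
  by rewrite nrm_ge0 /b mulrC -(nrm_pi (XI n k)) (nrm_dual_le _ (ETA_dual n k)).
have a_fin := le_lt_trans (le_nneseries2 a_le) b_fin.
have [l [_ outer flat]] := iter_flat_cvg_dominated a be a_fin.
have C_hausdorff := @norm_hausdorff (R[i] : numFieldType) (R[i] : numFieldType).
by rewrite (cvg_unique C_hausdorff (cv x) outer).
Qed.

End Api_representations.

Theorem proposition3 (R : realType) (G : topologicalType)
    (mul : G -> G -> G) (inv : G -> G) (one : G)
    (p : R) (E : completeNormedModType R[i]) (pi : G -> E -> E) :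
  lc_group mul inv one -> 1 < p -> QSLp p E -> isom_rep mul pi ->
  A_pi pi = A_pi_inf pi p /\ (forall u, Anorm_pi pi u = Anorm_pi_inf pi p u).
Proof.
move=> _ p_gt1 _ [_ pi_isometry _ _ _].
have to_inf := Arepr_pi_to_pi_inf pi p p_gt1.
have of_inf := Arepr_pi_inf_to_pi pi p p_gt1 pi_isometry.
split.
  by apply/seteqP; split; [exact: Aspace_transfer to_inf | exact: Aspace_transfer of_inf].
by move=> u; apply/le_anti; rewrite (Anorm_transfer of_inf) (Anorm_transfer to_inf).
Qed.
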